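(* For every $\delta>0$ there exists a real number $\varepsilon$ with $0<\varepsilon<\delta$ such that $$\inf_{n \ge 1} \, \Vert (1 + \varepsilon)^n \Vert > 2^{-17}\, \varepsilon\, |\log \varepsilon|^{-1}.$$
   Context: For a real number $x$, $\Vert x \Vert$ denotes the distance from $x$ to the nearest integer. $\log$ denotes the natural logarithm. The infimum is over all positive integers $n$. *)

From Stdlib Require Import Reals Lra.
Open Scope R_scope.

Definition dist_int (x : R) : R :=
  Rmin (x - IZR (Int_part x)) (IZR (Int_part x) + 1 - x).

Definition is_inf_pos (f : nat -> R) (r : R) : Prop :=
  (forall n, (1 <= n)%nat -> r <= f n) /\
  (forall m, (forall n, (1 <= n)%nat -> m <= f n) -> m <= r).

(* For t in [a, 2a] put eps = exp t - 1, so that (1 + eps)^n = exp (n t); with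
   a = exp (- L) and c = a / (1024 L) we look for t with ||exp (n t)|| >= c for
   all n >= 1, which gives the bound since |log eps| is about L.
   The candidates form a tree of subintervals of [a, 2a]: at depth j they are so
   short that exp (j t) moves by less than c on each of them, and those on which
   exp (j t) comes within c of an integer m are removed.  Such an interval lies in
   a window around log m / j of length about 4c / (j m); summing over m, the
   length removed at a depth below s is O(c a) in total, while at depth k >= s it
   is O(c) times the length that survived at depth k - s + 1, the intervals
   surviving there being long compared with the spacing of the windows.  As
   40 c s <= 1/2, the surviving length shrinks by a factor at least 1 - 40 c per
   level, hence never vanishes, and a compactness argument yields a t that works
   for every n. *)

From Stdlib Require Import Reals Lra Lia ZArith ClassicalEpsilon.
Open Scope R_scope.

Lemma exp_le x y : x <= y -> exp x <= exp y.
Proof. intros [H | ->]; [left; apply exp_increasing |]; lra. Qed.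

Lemma ln_le x y : 0 < x -> x <= y -> ln x <= ln y.
Proof. intros Hx [H | ->]; [left; apply ln_increasing |]; lra. Qed.

Lemma ln_le_sub1 y : 0 < y -> ln y <= y - 1.
Proof.
  intros Hy. rewrite <- (exp_ln y) at 2 by lra.
  pose proof (exp_ineq1_le (ln y)). lra.
Qed.

Lemma ln_sub_le x y : 0 < x -> 0 < y -> ln x - ln y <= x / y - 1.
Proof.
  intros Hx Hy.
  assert (Hxy : 0 < x / y) by (apply Rdiv_lt_0_compat; lra).
  pose proof (ln_le_sub1 _ Hxy) as H.
  unfold Rdiv in *. rewrite ln_mult, ln_Rinv in H by (try apply Rinv_0_lt_compat; lra).
  lra.
Qed.

Lemma ln_succ_sub_ge x : 0 < x -> 1 / (x + 1) <= ln (x + 1) - ln x.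
Proof.
  intros Hx. pose proof (ln_sub_le x (x + 1) Hx ltac:(lra)) as H.
  replace (x / (x + 1) - 1) with (- (1 / (x + 1))) in H by (field; lra).
  lra.
Qed.

Lemma exp_pow x n : exp x ^ n = exp (INR n * x).
Proof.
  induction n as [|n IH].
  - simpl. now rewrite Rmult_0_l, exp_0.
  - rewrite S_INR. simpl. rewrite IH, <- exp_plus. f_equal. ring.
Qed.

Lemma exp_sub_le x y : x <= y -> exp y - exp x <= (y - x) * exp y.
Proof.
  intros H.
  assert (E : exp x = exp y * exp (-(y - x))) by (rewrite <- exp_plus; f_equal; ring).
  pose proof (exp_ineq1_le (-(y - x))). pose proof (exp_pos y).
  rewrite E. nra.
Qed.

Lemma exp_mul_1_sub_le x : x < 1 -> exp x * (1 - x) <= 1.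
Proof.
  intros Hx. pose proof (exp_ineq1_le (- x)) as H. rewrite exp_Ropp in H.
  pose proof (exp_pos x).
  apply (Rmult_le_compat_l (exp x)) in H; [|lra].
  rewrite Rinv_r in H by lra. lra.
Qed.

Lemma exp_le_2 x : x <= 1 / 2 -> exp x <= 2.
Proof. intros Hx. pose proof (exp_mul_1_sub_le x ltac:(lra)). pose proof (exp_pos x). nra. Qed.

Lemma exp_sub_1_between t : 0 < t <= 1 / 2 -> 0 < exp t - 1 <= 2 * t.
Proof.
  intros Ht. pose proof (exp_ineq1 t ltac:(lra)).
  pose proof (exp_mul_1_sub_le t ltac:(lra)). pose proof (exp_le_2 t ltac:(lra)).
  assert (exp t * t <= 2 * t) by (apply Rmult_le_compat_r; lra). lra.
Qed.

Lemma exp_ge_sqr x : 0 <= x -> (1 + x / 2) * (1 + x / 2) <= exp x.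
Proof.
  intros Hx. replace (exp x) with (exp (x / 2) * exp (x / 2)) by (rewrite <- exp_plus; f_equal; field).
  pose proof (exp_ineq1_le (x / 2)). apply Rmult_le_compat; lra.
Qed.

Lemma ln_4_le_2 : ln 4 <= 2.
Proof.
  rewrite <- (ln_exp 2). apply ln_le; [lra|].
  pose proof (exp_ge_sqr 2). lra.
Qed.

Lemma exp_mul_lipschitz K x t : 0 <= K -> Rabs (t - x) <= 1 ->
  Rabs (exp (K * t) - exp (K * x)) <= K * exp (K * (x + 1)) * Rabs (t - x).
Proof.
  intros HK H. destruct (Rle_dec t x) as [Htx | Htx].
  - rewrite (Rabs_left1 (t - x)) in * by lra.
    pose proof (exp_sub_le (K * t) (K * x) ltac:(nra)).
    assert (exp (K * x) <= exp (K * (x + 1))) by (apply exp_le; nra).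
    assert (exp (K * t) <= exp (K * x)) by (apply exp_le; nra).
    rewrite (Rabs_left1 (exp (K * t) - _)) by lra.
    assert (0 <= K * (x - t)) by nra. nra.
  - rewrite (Rabs_right (t - x)) in * by lra.
    pose proof (exp_sub_le (K * x) (K * t) ltac:(nra)).
    assert (exp (K * t) <= exp (K * (x + 1))) by (apply exp_le; nra).
    assert (exp (K * x) <= exp (K * t)) by (apply exp_le; nra).
    rewrite (Rabs_right (exp (K * t) - _)) by lra.
    assert (0 <= K * (t - x)) by nra. nra.
Qed.

Lemma dist_int_le_Rabs x (m : Z) : dist_int x <= Rabs (x - IZR m).
Proof.
  unfold dist_int. destruct (base_Int_part x) as [H1 H2].
  destruct (Z.le_gt_cases m (Int_part x)) as [Hm | Hm].
  - apply IZR_le in Hm. eapply Rle_trans; [apply Rmin_l|].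
    unfold Rabs; destruct (Rcase_abs _); lra.
  - assert (Hm' : (Int_part x + 1 <= m)%Z) by lia. apply IZR_le in Hm'.
    rewrite plus_IZR in Hm'. eapply Rle_trans; [apply Rmin_r|].
    unfold Rabs; destruct (Rcase_abs _); lra.
Qed.

Lemma dist_int_attained x : exists m : Z, dist_int x = Rabs (x - IZR m).
Proof.
  unfold dist_int. destruct (base_Int_part x) as [H1 H2].
  destruct (Rle_dec (x - IZR (Int_part x)) (IZR (Int_part x) + 1 - x)).
  - exists (Int_part x). rewrite Rmin_left by lra.
    unfold Rabs; destruct (Rcase_abs _); lra.
  - exists (Int_part x + 1)%Z. rewrite Rmin_right, plus_IZR by lra.
    unfold Rabs; destruct (Rcase_abs _); lra.
Qed.

Lemma dist_int_lipschitz x y : dist_int x - Rabs (x - y) <= dist_int y.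
Proof.
  destruct (dist_int_attained y) as [m Hm]. pose proof (dist_int_le_Rabs x m).
  replace (x - IZR m) with ((x - y) + (y - IZR m)) in H by ring.
  pose proof (Rabs_triang (x - y) (y - IZR m)). lra.
Qed.

Lemma up_le_of_lt (m : Z) y : y < IZR m -> (up y <= m)%Z.
Proof.
  intros H. destruct (archimed y) as [H1 H2].
  destruct (Z_le_gt_dec (up y) m) as [|Hg]; [assumption|].
  assert (Hg' : (m <= up y - 1)%Z) by lia. apply IZR_le in Hg'.
  rewrite minus_IZR in Hg'. simpl in Hg'. lra.
Qed.

Lemma le_up_pred_of_lt (m : Z) y : IZR m < y -> (m <= up y - 1)%Z.
Proof.
  intros H. destruct (archimed y) as [H1 H2].
  assert (IZR m < IZR (up y)) by lra. apply lt_IZR in H0. lia.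
Qed.

Fixpoint rsum (f : nat -> R) (n : nat) : R :=
  match n with O => 0 | S n' => rsum f n' + f n' end.

Lemma rsum_ext f g n : (forall i, (i < n)%nat -> f i = g i) -> rsum f n = rsum g n.
Proof.
  induction n as [|n IH]; intros H; simpl; [reflexivity|].
  rewrite IH by (intros; apply H; lia). now rewrite H by lia.
Qed.

Lemma rsum_le f g n : (forall i, (i < n)%nat -> f i <= g i) -> rsum f n <= rsum g n.
Proof.
  induction n as [|n IH]; intros H; simpl; [lra|].
  pose proof (H n ltac:(lia)). pose proof (IH ltac:(intros; apply H; lia)). lra.
Qed.

Lemma rsum_plus f g n : rsum (fun i => f i + g i) n = rsum f n + rsum g n.
Proof. induction n as [|n IH]; simpl; [ring|]. rewrite IH; ring. Qed.

Lemma rsum_minus f g n : rsum (fun i => f i - g i) n = rsum f n - rsum g n.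
Proof. induction n as [|n IH]; simpl; [ring|]. rewrite IH; ring. Qed.

Lemma rsum_scal c f n : rsum (fun i => c * f i) n = c * rsum f n.
Proof. induction n as [|n IH]; simpl; [ring|]. rewrite IH; ring. Qed.

Lemma rsum_const c n : rsum (fun _ => c) n = INR n * c.
Proof. induction n as [|n IH]; [simpl; ring|]. rewrite S_INR. simpl. rewrite IH; ring. Qed.

Lemma rsum_ge0 f n : (forall i, (i < n)%nat -> 0 <= f i) -> 0 <= rsum f n.
Proof. intros H. rewrite <- (Rmult_0_r (INR n)), <- rsum_const. now apply rsum_le. Qed.

Lemma rsum_term_le f n k : (forall i, (i < n)%nat -> 0 <= f i) -> (k < n)%nat -> f k <= rsum f n.
Proof.
  induction n as [|n IH]; intros H Hk; [lia|]. simpl.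
  assert (0 <= rsum f n) by (apply rsum_ge0; intros; apply H; lia).
  pose proof (H n ltac:(lia)).
  destruct (Nat.eq_dec k n) as [-> | Hne]; [lra|].
  pose proof (IH ltac:(intros; apply H; lia) ltac:(lia)). lra.
Qed.

Lemma rsum_gt0_term f n : 0 < rsum f n -> exists i, (i < n)%nat /\ 0 < f i.
Proof.
  induction n as [|n IH]; simpl; intros H; [lra|].
  destruct (Rlt_dec 0 (f n)) as [Hp | Hp]; [exists n; split; [lia | assumption]|].
  destruct IH as [i [Hi Hf]]; [lra|]. exists i; split; [lia | assumption].
Qed.

Definition overlap (al be u v : R) : R := Rmax 0 (Rmin be v - Rmax al u).

Lemma overlap_le_len al be u v : al <= be -> overlap al be u v <= be - al.
Proof.
  intros H. unfold overlap. apply Rmax_lub; [lra|].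
  pose proof (Rmin_l be v). pose proof (Rmax_l al u). lra.
Qed.

Lemma overlap_split al be p q r : p <= q -> q <= r ->
  overlap al be p q + overlap al be q r = overlap al be p r.
Proof.
  intros H1 H2. unfold overlap, Rmax, Rmin.
  repeat match goal with |- context [Rle_dec ?x ?y] =>
    let H := fresh in destruct (Rle_dec x y) as [H | H]; revert H end; intros; lra.
Qed.

Lemma overlap_grid al be u d n : 0 <= d ->
  rsum (fun i => overlap al be (u + INR i * d) (u + INR i * d + d)) n
  = overlap al be u (u + INR n * d).
Proof.
  intros Hd. induction n as [|n IH].
  - simpl. rewrite Rmult_0_l, Rplus_0_r. unfold overlap. rewrite Rmax_left; [reflexivity|].
    pose proof (Rmin_r be u). pose proof (Rmax_r al u). lra.
  - simpl rsum. rewrite IH, S_INR.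
    replace (u + (INR n + 1) * d) with (u + INR n * d + d) by ring.
    apply overlap_split; pose proof (pos_INR n); nra.
Qed.

Lemma harmonic_le_ln x0 n : 0 < x0 ->
  rsum (fun i => 1 / (x0 + INR i + 1)) n <= ln (x0 + INR n) - ln x0.
Proof.
  intros Hx. induction n as [|n IH].
  - simpl. rewrite Rplus_0_r. lra.
  - simpl rsum. rewrite S_INR. pose proof (pos_INR n).
    pose proof (ln_succ_sub_ge (x0 + INR n) ltac:(lra)).
    replace (x0 + (INR n + 1)) with (x0 + INR n + 1) by ring. lra.
Qed.

(** * The tree of intervals *)

Section CantorTree.

Variables a c : R.
Hypothesis Ha : 0 < a.
Hypothesis Ha2 : a <= 1 / 2.
Hypothesis Hc : 0 < c.
Hypothesis Hca : 4 * c < a.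

Definition hits (j : nat) (u h : R) : Prop :=
  (1 <= j)%nat /\ exists t, u <= t <= u + h /\ dist_int (exp (INR j * t)) < c.

Definition hitsb (j : nat) (u h : R) : bool :=
  if excluded_middle_informative (hits j u h) then true else false.

Lemma hitsbP j u h : reflect (hits j u h) (hitsb j u h).
Proof. unfold hitsb. destruct excluded_middle_informative; now constructor. Qed.

Definition mesh (j : nat) (u : R) : R := c / (2 * INR (S j) * exp (INR (S j) * u)).
Definition nsub (j : nat) (u h : R) : nat := Z.to_nat (up (h / mesh j u)).
Definition sublen (j : nat) (u h : R) : R := h / INR (nsub j u h).
Definition substart (j : nat) (u h : R) (i : nat) : R := u + INR i * sublen j u h.

(* A node [(j, u, h)] is the interval [[u, u + h]] at depth [j]; it is cut into
   [nsub j u h] equal pieces at depth [j + 1], short enough for [exp ((j + 1) t)]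
   to vary by at most [c] on each.  [tsum kill n j u h phi] adds up [phi] over
   the descendants at depth [j + n], a killed node contributing [0] with its
   whole subtree. *)
Fixpoint tsum (kill : nat -> R -> R -> bool) (n j : nat) (u h : R)
    (phi : nat -> R -> R -> R) : R :=
  if kill j u h then 0 else
  match n with
  | O => phi j u h
  | S n' => rsum (fun i => tsum kill n' (S j) (substart j u h i) (sublen j u h) phi) (nsub j u h)
  end.

Local Notation alive := (tsum hitsb).
Local Notation full := (tsum (fun _ _ _ => false)).

Definition admissible (j : nat) (u h : R) : Prop :=
  a <= u /\ 0 < h /\ u + h <= 2 * a /\
  ((1 <= j)%nat -> INR j * h * exp (INR j * (u + h)) <= c) /\
  (a <= h \/ mesh j u / 2 <= h).

Lemma admissible_root : admissible 0 a a.
Proof. repeat split; try lra. intros H; lia. Qed.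

Lemma mesh_pos j u : 0 < mesh j u.
Proof.
  unfold mesh. apply Rdiv_lt_0_compat; [lra|].
  pose proof (exp_pos (INR (S j) * u)). pose proof (lt_0_INR (S j) (Nat.lt_0_succ j)). nra.
Qed.

Lemma nsub_bounds j u h : 0 < h ->
  1 <= INR (nsub j u h) /\ h / mesh j u < INR (nsub j u h) <= h / mesh j u + 1.
Proof.
  intros Hh. unfold nsub. pose proof (mesh_pos j u).
  assert (Hy : 0 < h / mesh j u) by (apply Rdiv_lt_0_compat; lra).
  destruct (archimed (h / mesh j u)) as [H1 H2].
  assert (Hz : (0 < up (h / mesh j u))%Z) by (apply lt_IZR; lra).
  rewrite INR_IZR_INZ, Z2Nat.id by lia.
  assert (Hz1 : (1 <= up (h / mesh j u))%Z) by lia. apply IZR_le in Hz1.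
  repeat split; lra.
Qed.

Lemma nsub_eq_1 j u h : 0 < h -> h / mesh j u < 1 -> nsub j u h = 1%nat.
Proof.
  intros Hh Hl. unfold nsub. pose proof (mesh_pos j u).
  assert (0 < h / mesh j u) by (apply Rdiv_lt_0_compat; lra).
  now rewrite <- (tech_up (h / mesh j u) 1) by lra.
Qed.

Lemma sublen_pos j u h : 0 < h -> 0 < sublen j u h.
Proof.
  intros Hh. destruct (nsub_bounds j u h Hh) as [H _].
  apply Rdiv_lt_0_compat; lra.
Qed.

Lemma sublen_lt_mesh j u h : 0 < h -> sublen j u h < mesh j u.
Proof.
  intros Hh. destruct (nsub_bounds j u h Hh) as [H1 [H2 _]]. pose proof (mesh_pos j u).
  unfold sublen. apply (Rmult_lt_reg_r (INR (nsub j u h))); [lra|].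
  replace (h / INR (nsub j u h) * INR (nsub j u h)) with h by (field; lra).
  apply (Rmult_lt_reg_r (/ mesh j u)); [apply Rinv_0_lt_compat; lra|].
  replace (mesh j u * INR (nsub j u h) * / mesh j u) with (INR (nsub j u h)) by (field; lra).
  exact H2.
Qed.

Lemma sublen_ge_half_mesh j u h : 1 <= h / mesh j u -> mesh j u / 2 <= sublen j u h.
Proof.
  intros Hy. pose proof (mesh_pos j u).
  assert (Hh : 0 < h) by (apply (Rmult_lt_reg_r (/ mesh j u)); [apply Rinv_0_lt_compat |]; lra).
  destruct (nsub_bounds j u h Hh) as [H1 [_ H3]].
  unfold sublen. apply (Rmult_le_reg_r (INR (nsub j u h))); [lra|].
  replace (h / INR (nsub j u h) * INR (nsub j u h)) with h by (field; lra).
  apply Rle_trans with (mesh j u / 2 * (2 * (h / mesh j u))).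
  - apply Rmult_le_compat_l; lra.
  - right. field. lra.
Qed.

Lemma substart_bounds j u h i : 0 < h -> (i < nsub j u h)%nat ->
  u <= substart j u h i /\ substart j u h i + sublen j u h <= u + h.
Proof.
  intros Hh Hi. destruct (nsub_bounds j u h Hh) as [H1 _].
  pose proof (sublen_pos j u h Hh). pose proof (pos_INR i).
  assert (Hir : INR i + 1 <= INR (nsub j u h)) by (rewrite <- S_INR; apply le_INR; lia).
  assert (E : INR (nsub j u h) * sublen j u h = h) by (unfold sublen; field; lra).
  unfold substart. split; nra.
Qed.

Lemma mesh_antitone j u j' u' : (j <= j')%nat -> 0 <= u <= u' -> mesh j' u' <= mesh j u.
Proof.
  intros Hj Hu. unfold mesh. apply Rmult_le_compat_l; [lra|]. apply Rinv_le_contravar.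
  - pose proof (exp_pos (INR (S j) * u)). pose proof (lt_0_INR (S j) (Nat.lt_0_succ j)). nra.
  - assert (HS : INR (S j) <= INR (S j')) by (apply le_INR; lia).
    pose proof (pos_INR (S j)).
    assert (exp (INR (S j) * u) <= exp (INR (S j') * u')) by (apply exp_le; nra).
    pose proof (exp_pos (INR (S j) * u)). nra.
Qed.

Lemma admissible_scale j u h : admissible j u h -> INR (S j) * h <= 1 / 2.
Proof.
  intros [Hu [Hh [Huh [Himg _]]]]. destruct j as [|j].
  - simpl. lra.
  - specialize (Himg ltac:(lia)). pose proof (pos_INR (S j)).
    assert (H1 : 1 <= INR (S j)) by (apply (le_INR 1); lia).
    assert (1 <= exp (INR (S j) * (u + h))) by (pose proof (exp_ineq1_le (INR (S j) * (u + h))); nra).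
    rewrite (S_INR (S j)). nra.
Qed.

Lemma child_image j u h i : admissible j u h -> (i < nsub j u h)%nat ->
  INR (S j) * sublen j u h * exp (INR (S j) * (substart j u h i + sublen j u h)) <= c.
Proof.
  intros Hadm Hi. pose proof (admissible_scale j u h Hadm) as Hsmall.
  destruct Hadm as [Hu [Hh _]].
  destruct (substart_bounds j u h i Hh Hi) as [_ Hend].
  pose proof (sublen_pos j u h Hh). pose proof (sublen_lt_mesh j u h Hh).
  pose proof (lt_0_INR (S j) (Nat.lt_0_succ j)). pose proof (exp_pos (INR (S j) * u)).
  assert (Eend : exp (INR (S j) * (substart j u h i + sublen j u h)) <= 2 * exp (INR (S j) * u)).
  { apply Rle_trans with (exp (INR (S j) * u) * exp (INR (S j) * h)).
    - rewrite <- exp_plus. apply exp_le. nra.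
    - pose proof (exp_le_2 _ Hsmall). nra. }
  assert (Emesh : INR (S j) * mesh j u * exp (INR (S j) * u) = c / 2)
    by (unfold mesh; field; split; [apply exp_neq_0 | apply not_0_INR; lia]).
  apply Rle_trans with (INR (S j) * sublen j u h * (2 * exp (INR (S j) * u))).
  - apply Rmult_le_compat_l; nra.
  - nra.
Qed.

Lemma child_long j u h i : admissible j u h -> (i < nsub j u h)%nat ->
  a <= sublen j u h \/ mesh (S j) (substart j u h i) / 2 <= sublen j u h.
Proof.
  intros [Hu [Hh [_ [_ Hlong]]]] Hi.
  destruct (substart_bounds j u h i Hh Hi) as [Hstart _].
  assert (Hmesh : mesh (S j) (substart j u h i) <= mesh j u) by (apply mesh_antitone; lia || lra).
  destruct (Rlt_dec (h / mesh j u) 1) as [Hy | Hy].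
  - assert (Hn : nsub j u h = 1%nat) by now apply nsub_eq_1.
    assert (Hs : sublen j u h = h) by (unfold sublen; rewrite Hn; simpl; field).
    rewrite Hs. lra.
  - right. pose proof (sublen_ge_half_mesh j u h ltac:(lra)). lra.
Qed.

Lemma admissible_child j u h i : admissible j u h -> (i < nsub j u h)%nat ->
  admissible (S j) (substart j u h i) (sublen j u h).
Proof.
  intros Hadm Hi. pose proof Hadm as [Hu [Hh [Huh _]]].
  destruct (substart_bounds j u h i Hh Hi).
  repeat split; try lra.
  - now apply sublen_pos.
  - intros _. now apply child_image.
  - now apply child_long.
Qed.

Lemma tsum_comp kill n m j u h phi :
  tsum kill (n + m) j u h phi = tsum kill n j u h (fun j' u' h' => tsum kill m j' u' h' phi).
Proof.
  revert j u h. induction n as [|n IH]; intros j u h; simpl.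
  - destruct m; simpl; now destruct (kill j u h).
  - destruct (kill j u h); [reflexivity|]. apply rsum_ext; intros i _. apply IH.
Qed.

Lemma tsum_minus kill n j u h phi psi :
  tsum kill n j u h (fun j' u' h' => phi j' u' h' - psi j' u' h')
  = tsum kill n j u h phi - tsum kill n j u h psi.
Proof.
  revert j u h. induction n as [|n IH]; intros j u h; simpl; destruct (kill j u h); try ring.
  rewrite <- rsum_minus. apply rsum_ext; intros i _; apply IH.
Qed.

Lemma tsum_plus kill n j u h phi psi :
  tsum kill n j u h (fun j' u' h' => phi j' u' h' + psi j' u' h')
  = tsum kill n j u h phi + tsum kill n j u h psi.
Proof.
  revert j u h. induction n as [|n IH]; intros j u h; simpl; destruct (kill j u h); try ring.
  rewrite <- rsum_plus. apply rsum_ext; intros i _; apply IH.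
Qed.

Lemma tsum_scal kill n j u h k phi :
  tsum kill n j u h (fun j' u' h' => k * phi j' u' h') = k * tsum kill n j u h phi.
Proof.
  revert j u h. induction n as [|n IH]; intros j u h; simpl; destruct (kill j u h); try ring.
  rewrite <- rsum_scal. apply rsum_ext; intros i _; apply IH.
Qed.

Lemma tsum_zero kill n j u h : tsum kill n j u h (fun _ _ _ => 0) = 0.
Proof.
  revert j u h. induction n as [|n IH]; intros j u h; simpl; destruct (kill j u h); try reflexivity.
  rewrite (rsum_ext _ (fun _ => 0)) by (intros; apply IH). rewrite rsum_const; ring.
Qed.

Lemma tsum_rsum kill n j u h (g : nat -> nat -> R -> R -> R) N :
  tsum kill n j u h (fun j' u' h' => rsum (fun i => g i j' u' h') N)
  = rsum (fun i => tsum kill n j u h (g i)) N.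
Proof.
  induction N as [|N IH]; simpl; [apply tsum_zero|].
  rewrite <- IH. apply (tsum_plus kill n j u h (fun j' u' h' => rsum (fun i => g i j' u' h') N) (g N)).
Qed.

Lemma tsum_ext kill n j u h phi psi : admissible j u h ->
  (forall u' h', admissible (j + n) u' h' -> kill (j + n)%nat u' h' = false ->
     phi (j + n)%nat u' h' = psi (j + n)%nat u' h') ->
  tsum kill n j u h phi = tsum kill n j u h psi.
Proof.
  revert j u h. induction n as [|n IH]; intros j u h Hadm H; simpl;
    destruct (kill j u h) eqn:E; try reflexivity.
  - rewrite Nat.add_0_r in H. now apply H.
  - apply rsum_ext; intros i Hi. apply IH; [now apply admissible_child|].
    rewrite <- Nat.add_succ_comm in H. exact H.
Qed.

Lemma tsum_mono kill n j u h phi psi : admissible j u h ->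
  (forall u' h', admissible (j + n) u' h' -> u <= u' -> u' + h' <= u + h ->
     phi (j + n)%nat u' h' <= psi (j + n)%nat u' h') ->
  tsum kill n j u h phi <= tsum kill n j u h psi.
Proof.
  revert j u h. induction n as [|n IH]; intros j u h Hadm H; simpl; destruct (kill j u h); try lra.
  - rewrite Nat.add_0_r in H. apply H; [assumption | lra | lra].
  - apply rsum_le; intros i Hi.
    destruct (substart_bounds j u h i ltac:(apply Hadm) Hi).
    apply IH; [now apply admissible_child|].
    intros u' h' Hadm' Hu' Hh'. rewrite <- Nat.add_succ_comm in H. apply H; [assumption | lra | lra].
Qed.

Lemma tsum_ge0 kill n j u h phi : admissible j u h ->
  (forall u' h', admissible (j + n) u' h' -> 0 <= phi (j + n)%nat u' h') ->
  0 <= tsum kill n j u h phi.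
Proof.
  intros Hadm H. rewrite <- (tsum_zero kill n j u h).
  apply tsum_mono; [assumption|]. intros u' h' Hadm' _ _. now apply H.
Qed.

Lemma tsum_le_full kill n j u h phi : admissible j u h ->
  (forall u' h', admissible (j + n) u' h' -> 0 <= phi (j + n)%nat u' h') ->
  tsum kill n j u h phi <= full n j u h phi.
Proof.
  revert j u h. induction n as [|n IH]; intros j u h Hadm H; simpl.
  - rewrite Nat.add_0_r in H. specialize (H u h Hadm). destruct (kill j u h); lra.
  - rewrite <- Nat.add_succ_comm in H.
    assert (Hsum : rsum (fun i => tsum kill n (S j) (substart j u h i) (sublen j u h) phi) (nsub j u h)
      <= rsum (fun i => full n (S j) (substart j u h i) (sublen j u h) phi) (nsub j u h)).
    { apply rsum_le; intros i Hi. apply IH; [now apply admissible_child | exact H]. }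
    assert (0 <= rsum (fun i => tsum kill n (S j) (substart j u h i) (sublen j u h) phi) (nsub j u h)).
    { apply rsum_ge0; intros i Hi. apply tsum_ge0; [now apply admissible_child | exact H]. }
    destruct (kill j u h); lra.
Qed.

Lemma alive_point n j u h : admissible j u h -> 0 < alive n j u h (fun _ _ h' => h') ->
  exists t, u <= t <= u + h /\
    forall i, (j <= i <= j + n)%nat -> (1 <= i)%nat -> c <= dist_int (exp (INR i * t)).
Proof.
  revert j u h. induction n as [|n IH]; intros j u h Hadm Hpos; simpl in Hpos;
    pose proof Hadm as [_ [Hh _]]; destruct (hitsbP j u h) as [_ | Hnot]; try lra.
  - exists u. split; [lra|]. intros i Hi H1. assert (i = j) by lia. subst i.
    apply Rnot_lt_le. intros Hlt. apply Hnot. split; [assumption|]. exists u; split; [lra | assumption].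
  - destruct (rsum_gt0_term _ _ Hpos) as [i [Hi Hposi]].
    destruct (substart_bounds j u h i Hh Hi).
    destruct (IH _ _ _ (admissible_child j u h i Hadm Hi) Hposi) as [t [Ht Hall]].
    exists t; split; [lra|]. intros i0 Hi0 H1.
    destruct (Nat.eq_dec i0 j) as [-> | Hne]; [|apply Hall; lia].
    apply Rnot_lt_le. intros Hlt. apply Hnot. split; [assumption|]. exists t; split; [lra | assumption].
Qed.

(** * Length removed at one depth *)

Definition hit_len (j : nat) (u h : R) : R := if hitsb j u h then h else 0.

Definition in_window (K : nat) (m : Z) (j : nat) (u h : R) : R :=
  if Rle_dec (ln (IZR m - 2 * c) / INR K) u then
    if Rle_dec (u + h) (ln (IZR m + 2 * c) / INR K) then h else 0
  else 0.

Definition first_int (K : nat) (u : R) : Z := Z.max 2 (up (exp (INR K * u) - 2 * c)).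
Definition last_int (K : nat) (v : R) : Z := (up (exp (INR K * v) + 2 * c) - 1)%Z.
Definition num_int (K : nat) (u v : R) : nat := Z.to_nat (last_int K v - first_int K u + 1).

Lemma first_int_ge2 K u : 2 <= IZR (first_int K u).
Proof. apply IZR_le. unfold first_int. lia. Qed.

Lemma first_int_gt K u : exp (INR K * u) - 2 * c < IZR (first_int K u).
Proof.
  unfold first_int. destruct (archimed (exp (INR K * u) - 2 * c)) as [H _].
  assert (IZR (up (exp (INR K * u) - 2 * c)) <= IZR (Z.max 2 (up (exp (INR K * u) - 2 * c))))
    by (apply IZR_le; lia).
  lra.
Qed.

Lemma last_int_le K v : IZR (last_int K v) <= exp (INR K * v) + 2 * c.
Proof.
  unfold last_int. rewrite minus_IZR. destruct (archimed (exp (INR K * v) + 2 * c)). simpl. lra.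
Qed.

Lemma num_int_pos K u v : (0 < num_int K u v)%nat ->
  IZR (first_int K u) + INR (num_int K u v) = IZR (last_int K v) + 1.
Proof.
  unfold num_int. intros H.
  rewrite INR_IZR_INZ, Z2Nat.id by lia. rewrite !plus_IZR, minus_IZR. simpl. ring.
Qed.

Lemma full_in_window_le n j u h K m : admissible j u h ->
  full n j u h (in_window K m)
  <= overlap (ln (IZR m - 2 * c) / INR K) (ln (IZR m + 2 * c) / INR K) u (u + h).
Proof.
  revert j u h. induction n as [|n IH]; intros j u h Hadm; simpl;
    pose proof Hadm as [_ [Hh _]].
  - unfold in_window, overlap.
    destruct (Rle_dec _ u); [destruct (Rle_dec (u + h) _)|]; try apply Rmax_l.
    rewrite (Rmax_right _ u), (Rmin_right _ (u + h)) by lra.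
    eapply Rle_trans; [|apply Rmax_r]. lra.
  - destruct (nsub_bounds j u h Hh) as [Hn _].
    eapply Rle_trans.
    + apply rsum_le; intros i Hi. now apply IH, admissible_child.
    + unfold substart. rewrite overlap_grid by (apply Rlt_le, sublen_pos, Hh).
      replace (INR (nsub j u h) * sublen j u h) with h by (unfold sublen; field; lra). lra.
Qed.

Lemma hit_near_int K u h : (1 <= K)%nat -> admissible K u h -> hits K u h ->
  exists m : Z, (2 <= m)%Z /\ IZR m - 2 * c < exp (INR K * u) /\ exp (INR K * (u + h)) < IZR m + 2 * c.
Proof.
  intros HK [Hu [Hh [_ [Himg _]]]] [_ [t [Ht Hd]]]. specialize (Himg HK).
  assert (HK1 : 1 <= INR K) by (apply (le_INR 1); lia).
  destruct (dist_int_attained (exp (INR K * t))) as [m Hm]. rewrite Hm in Hd.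
  apply Rabs_def2 in Hd.
  assert (Ewidth : exp (INR K * (u + h)) - exp (INR K * u) <= c).
  { eapply Rle_trans; [apply exp_sub_le; nra|].
    replace (INR K * (u + h) - INR K * u) with (INR K * h) by ring. lra. }
  assert (exp (INR K * u) <= exp (INR K * t)) by (apply exp_le; nra).
  assert (exp (INR K * t) <= exp (INR K * (u + h))) by (apply exp_le; nra).
  exists m. split; [|lra].
  pose proof (exp_ineq1_le (INR K * t)).
  assert (1 < IZR m) by nra. apply lt_IZR in H2. lia.
Qed.

Lemma in_window_of_near K m u h : (1 <= K)%nat -> 0 < IZR m - 2 * c ->
  IZR m - 2 * c < exp (INR K * u) -> exp (INR K * (u + h)) < IZR m + 2 * c ->
  in_window K m K u h = h.
Proof.
  intros HK Hm H1 H2. assert (HK0 : 0 < INR K) by (apply lt_0_INR; lia).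
  unfold in_window.
  destruct (Rle_dec _ u) as [_ | Hn]; [destruct (Rle_dec (u + h) _) as [_ | Hn] |];
    [reflexivity | exfalso; apply Hn .. ];
    apply (Rmult_le_reg_l (INR K)); try assumption; rewrite Rmult_div_assoc.
  - rewrite <- (ln_exp (INR K * (u + h))), Rmult_div_r by lra. apply ln_le; [apply exp_pos | lra].
  - rewrite <- (ln_exp (INR K * u)), Rmult_div_r by lra. apply ln_le; lra.
Qed.

Lemma hit_len_le_windows K u v u' h' : (1 <= K)%nat -> admissible K u' h' -> u <= u' -> u' + h' <= v ->
  hit_len K u' h' <= rsum (fun i => in_window K (first_int K u + Z.of_nat i) K u' h') (num_int K u v).
Proof.
  intros HK Hadm Hu Hv. pose proof Hadm as [_ [Hh _]].
  assert (HK0 : 0 <= INR K) by apply pos_INR.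
  assert (Hge0 : forall i, (i < num_int K u v)%nat ->
    0 <= in_window K (first_int K u + Z.of_nat i) K u' h').
  { intros i _. unfold in_window. destruct (Rle_dec _ _); [destruct (Rle_dec _ _)|]; lra. }
  unfold hit_len. destruct (hitsbP K u' h') as [Hhit | _]; [|now apply rsum_ge0].
  destruct (hit_near_int K u' h' HK Hadm Hhit) as [m [Hm2 [Hlo Hhi]]].
  assert (exp (INR K * u) <= exp (INR K * u')) by (apply exp_le; nra).
  assert (exp (INR K * u') <= exp (INR K * (u' + h'))) by (apply exp_le; nra).
  assert (exp (INR K * (u' + h')) <= exp (INR K * v)) by (apply exp_le; nra).
  assert (Hfirst : (first_int K u <= m)%Z) by (apply Z.max_lub; [lia | apply up_le_of_lt; lra]).
  assert (Hlast : (m <= last_int K v)%Z) by (apply le_up_pred_of_lt; lra).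
  set (i := Z.to_nat (m - first_int K u)).
  assert (Hi : (first_int K u + Z.of_nat i)%Z = m) by (unfold i; rewrite Z2Nat.id; lia).
  eapply Rle_trans; [|apply (rsum_term_le _ _ i Hge0); unfold i, num_int; lia].
  apply IZR_le in Hm2. rewrite Hi, in_window_of_near; try lra. assumption.
Qed.

Lemma window_len_le K x : (1 <= K)%nat -> 2 <= x ->
  ln (x + 2 * c) / INR K - ln (x - 2 * c) / INR K <= 8 * c / INR K * (1 / (x + 1)).
Proof.
  intros HK Hx. assert (HK0 : 0 < INR K) by (apply lt_0_INR; lia).
  pose proof (ln_sub_le (x + 2 * c) (x - 2 * c) ltac:(lra) ltac:(lra)) as H.
  replace ((x + 2 * c) / (x - 2 * c) - 1) with (4 * c / (x - 2 * c)) in H by (field; lra).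
  assert (4 * c / (x - 2 * c) <= 8 * c / (x + 1)).
  { apply (Rmult_le_reg_r ((x - 2 * c) * (x + 1))); [nra|].
    replace (4 * c / (x - 2 * c) * ((x - 2 * c) * (x + 1))) with (4 * c * (x + 1)) by (field; lra).
    replace (8 * c / (x + 1) * ((x - 2 * c) * (x + 1))) with (8 * c * (x - 2 * c)) by (field; lra).
    nra. }
  replace (ln (x + 2 * c) / INR K - ln (x - 2 * c) / INR K)
    with ((ln (x + 2 * c) - ln (x - 2 * c)) / INR K) by (field; lra).
  replace (8 * c / INR K * (1 / (x + 1))) with ((8 * c / (x + 1)) / INR K) by (field; lra).
  apply Rmult_le_compat_r; [apply Rlt_le, Rinv_0_lt_compat; lra | lra].
Qed.

Lemma full_hit_len_le n w u h : admissible w u h -> (1 <= w + n)%nat ->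
  full n w u h hit_len
  <= 8 * c / INR (w + n) * (ln (IZR (first_int (w + n) u) + INR (num_int (w + n) u (u + h)))
                            - ln (IZR (first_int (w + n) u))).
Proof.
  intros Hadm HK. set (K := (w + n)%nat) in *.
  assert (HK0 : 0 < INR K) by (apply lt_0_INR; lia).
  set (x0 := IZR (first_int K u)). pose proof (first_int_ge2 K u) as Hx0. fold x0 in Hx0.
  eapply Rle_trans.
  { apply (tsum_mono _ _ _ _ _ _
      (fun j u' h' => rsum (fun i => in_window K (first_int K u + Z.of_nat i) j u' h') (num_int K u (u + h))));
      [assumption|].
    intros u' h' Hadm' Hu' Hh'. apply hit_len_le_windows; assumption. }
  rewrite tsum_rsum.
  eapply Rle_trans; [|apply Rmult_le_compat_l; [apply Rlt_le, Rdiv_lt_0_compat; lra | apply harmonic_le_ln; lra]].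
  rewrite <- rsum_scal. apply rsum_le; intros i _.
  eapply Rle_trans; [apply full_in_window_le; assumption|].
  rewrite plus_IZR, <- INR_IZR_INZ. fold x0. pose proof (pos_INR i).
  eapply Rle_trans; [apply overlap_le_len|].
  - apply Rmult_le_compat_r; [apply Rlt_le, Rinv_0_lt_compat; lra|]. apply ln_le; lra.
  - replace (x0 + INR i + 1) with ((x0 + INR i) + 1) by ring. apply window_len_le; [lia | lra].
Qed.

Lemma full_hit_len_root n : (1 <= n)%nat -> full n 0 a a hit_len <= 16 * c * a.
Proof.
  intros Hn. pose proof (full_hit_len_le n 0 a a admissible_root Hn) as HB.
  simpl plus in HB. eapply Rle_trans; [exact HB|].
  assert (Hn1 : 1 <= INR n) by (apply (le_INR 1); assumption).
  assert (Hcoef : 0 < 8 * c / INR n) by (apply Rdiv_lt_0_compat; lra).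
  destruct (Nat.eq_dec (num_int n a (a + a)) 0) as [H0 | H0].
  - rewrite H0. simpl INR. rewrite Rplus_0_r, Rminus_diag, Rmult_0_r. nra.
  - pose proof (num_int_pos n a (a + a) ltac:(lia)) as Hnum. rewrite Hnum.
    pose proof (pos_INR (num_int n a (a + a))).
    pose proof (last_int_le n (a + a)). pose proof (first_int_ge2 n a).
    set (E := exp (INR n * (a + a))) in *.
    assert (HE : 1 + INR n * (a + a) <= E) by apply exp_ineq1_le.
    assert (a + a <= INR n * (a + a)) by nra.
    assert (Hl1 : ln (IZR (last_int n (a + a)) + 1) <= ln (2 * E)) by (apply ln_le; lra).
    rewrite ln_mult in Hl1 by nra. unfold E in Hl1. rewrite ln_exp in Hl1.
    assert (Hl2 : ln 2 <= ln (IZR (first_int n a))) by (apply ln_le; lra).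
    apply Rle_trans with (8 * c / INR n * (INR n * (a + a))).
    + apply Rmult_le_compat_l; lra.
    + right. field. lra.
Qed.

Lemma full_hit_len_deep n w u h : admissible w u h -> (1 <= w)%nat ->
  2 <= exp (INR (w + n) * u) ->
  24 <= INR (w + n) * exp (INR (w + n) * u) * h ->
  INR (w + n) * h <= 1 / 32 ->
  full n w u h hit_len <= 20 * c * h.
Proof.
  intros Hadm Hw HE2 Hlong Hshort.
  pose proof (full_hit_len_le n w u h Hadm ltac:(lia)) as HB.
  eapply Rle_trans; [exact HB|].
  set (K := (w + n)%nat) in *.
  assert (HK1 : 1 <= INR K) by (apply (le_INR 1); lia).
  assert (Hcoef : 0 < 8 * c / INR K) by (apply Rdiv_lt_0_compat; lra).
  destruct Hadm as [Hu [Hh _]].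
  destruct (Nat.eq_dec (num_int K u (u + h)) 0) as [H0 | H0].
  - rewrite H0. simpl INR. rewrite Rplus_0_r, Rminus_diag, Rmult_0_r. nra.
  - pose proof (num_int_pos K u (u + h) ltac:(lia)) as Hnum. rewrite Hnum.
    pose proof (pos_INR (num_int K u (u + h))).
    pose proof (last_int_le K (u + h)) as Hlast. pose proof (first_int_gt K u).
    pose proof (first_int_ge2 K u).
    set (E := exp (INR K * u)) in *. set (F := exp (INR K * h)).
    assert (EF : exp (INR K * (u + h)) = E * F) by (unfold E, F; rewrite <- exp_plus; f_equal; ring).
    rewrite EF in Hlast.
    assert (HF : F <= 32 / 31).
    { pose proof (exp_mul_1_sub_le (INR K * h) ltac:(lra)) as HF1.
      pose proof (exp_pos (INR K * h)) as HF0. fold F in HF0, HF1. nra. }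
    assert (Hgrowth : E * F - E <= INR K * h * (E * F)).
    { pose proof (exp_sub_le (INR K * u) (INR K * (u + h)) ltac:(nra)) as Hmv.
      replace (INR K * (u + h) - INR K * u) with (INR K * h) in Hmv by ring.
      rewrite EF in Hmv. exact Hmv. }
    set (x0 := IZR (first_int K u)) in *. set (X := IZR (last_int K (u + h)) + 1).
    pose proof (ln_sub_le X x0 ltac:(unfold X; lra) ltac:(lra)) as L.
    assert (Hq : X / x0 - 1 <= 5 / 2 * (INR K * h)).
    { apply (Rmult_le_reg_r x0); [lra|].
      replace ((X / x0 - 1) * x0) with (X - x0) by (field; lra).
      assert (HKhE : 0 <= INR K * h * E) by (pose proof (exp_pos (INR K * u)) as HE0; fold E in HE0; nra).
      assert (A1 : X - x0 <= INR K * h * (E * F) + 3) by (unfold X; lra).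
      assert (A2 : INR K * h * (E * F) <= INR K * h * E * (32 / 31)) by nra.
      assert (A3 : E / 2 <= x0) by lra.
      assert (0 <= INR K * h) by nra.
      nra. }
    apply Rle_trans with (8 * c / INR K * (5 / 2 * (INR K * h))).
    + apply Rmult_le_compat_l; lra.
    + right. field. lra.
Qed.

(** * Decay of the surviving length *)

Definition interval_len (j : nat) (u h : R) : R := h.
Definition surviving_len (k : nat) : R := alive k 0 a a interval_len.
Definition removed_len (j : nat) (u h : R) : R := full 1 j u h hit_len.

Lemma surviving_len_0 : surviving_len 0 = a.
Proof. unfold surviving_len. simpl. destruct (hitsbP 0 a a) as [[H _] | _]; [lia | reflexivity]. Qed.

Lemma surviving_len_S k : surviving_len (S k) = surviving_len k - alive k 0 a a removed_len.
Proof.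
  unfold surviving_len. rewrite <- Nat.add_1_r, tsum_comp, <- tsum_minus.
  apply tsum_ext; [apply admissible_root|]. intros u h [_ [Hh _]] Hnot. simpl in *.
  rewrite Hnot. unfold removed_len, interval_len. simpl.
  destruct (nsub_bounds k u h Hh) as [Hn _].
  transitivity (rsum (fun i => sublen k u h - hit_len (S k) (substart k u h i) (sublen k u h)) (nsub k u h)).
  - apply rsum_ext; intros i _. unfold hit_len. destruct (hitsb (S k) _ _); ring.
  - rewrite rsum_minus, rsum_const. unfold sublen. field. lra.
Qed.

Lemma removed_len_ge0 j u h : admissible j u h -> 0 <= removed_len j u h.
Proof.
  intros Hadm. apply tsum_ge0; [assumption|]. intros u' h' [_ [Hh _]].
  unfold hit_len. destruct (hitsb _ _ _); lra.
Qed.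

Lemma removed_shallow k : alive k 0 a a removed_len <= 16 * c * a.
Proof.
  eapply Rle_trans.
  - apply tsum_le_full; [apply admissible_root|]. intros u h Hadm. now apply removed_len_ge0.
  - unfold removed_len. rewrite <- tsum_comp. apply full_hit_len_root. lia.
Qed.

Variable s : nat.
Hypothesis Hs1 : (1 <= s)%nat.
Hypothesis Hs_exp : 2 <= exp (INR s * a).
Hypothesis Hs_long : 24 <= c / 4 * exp ((INR s - 1) * a).
Hypothesis Hs_short : c * (INR s + 1) <= 1 / 32.
Hypothesis Hs_rate : 40 * c * INR s <= 1 / 2.

(* A node surviving at depth [w >= 1] is, [s] levels further down, long
   compared with the gaps [1 / (K exp (K u))] between the preimages of integers. *)
Lemma deep_conditions w u h : admissible w u h -> (1 <= w)%nat ->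
  2 <= exp (INR (w + s) * u) /\
  24 <= INR (w + s) * exp (INR (w + s) * u) * h /\
  INR (w + s) * h <= 1 / 32.
Proof.
  intros [Hu [Hh [Huh [Himg Hlong]]]] Hw. specialize (Himg Hw).
  assert (Hw1 : 1 <= INR w) by (apply (le_INR 1); assumption).
  assert (Hs1r : 1 <= INR s) by (apply (le_INR 1); assumption).
  rewrite plus_INR.
  assert (exp (INR s * a) <= exp ((INR w + INR s) * u)) by (apply exp_le; nra).
  assert (1 <= exp (INR w * (u + h))) by (pose proof (exp_ineq1_le (INR w * (u + h))); nra).
  assert (Hwh : INR w * h <= c) by nra.
  split; [lra | split; [| nra]].
  destruct Hlong as [Hl | Hl].
  - assert (0 < exp ((INR w + INR s) * u)) by apply exp_pos. nra.
  - unfold mesh in Hl. set (K1 := INR (S w)) in Hl.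
    assert (HK1 : 0 < K1) by (apply lt_0_INR; lia).
    assert (HK1s : K1 <= INR w + INR s) by (unfold K1; rewrite S_INR; lra).
    pose proof (exp_pos (K1 * u)) as E1.
    assert (Hl' : c <= 4 * K1 * exp (K1 * u) * h).
    { apply (Rmult_le_reg_r (/ (4 * K1 * exp (K1 * u)))); [apply Rinv_0_lt_compat; nra|].
      replace (4 * K1 * exp (K1 * u) * h * / (4 * K1 * exp (K1 * u))) with h by (field; lra).
      replace (c / (2 * K1 * exp (K1 * u)) / 2) with (c * / (4 * K1 * exp (K1 * u))) in Hl by (field; lra).
      lra. }
    assert (Hsplit : exp ((INR w + INR s) * u) = exp (K1 * u) * exp ((INR s - 1) * u)).
    { rewrite <- exp_plus. f_equal. unfold K1. rewrite S_INR. ring. }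
    assert (exp ((INR s - 1) * a) <= exp ((INR s - 1) * u)) by (apply exp_le; nra).
    pose proof (exp_pos ((INR s - 1) * u)).
    rewrite Hsplit.
    apply Rle_trans with (c / 4 * exp ((INR s - 1) * u)); [nra|].
    apply Rle_trans with (K1 * exp (K1 * u) * h * exp ((INR s - 1) * u)); [nra|].
    assert (0 <= exp (K1 * u) * h * exp ((INR s - 1) * u)) by nra. nra.
Qed.

Lemma removed_deep w : (1 <= w)%nat ->
  alive (w + (s - 1)) 0 a a removed_len <= 20 * c * surviving_len w.
Proof.
  intros Hw. rewrite tsum_comp. unfold surviving_len. rewrite <- tsum_scal.
  apply tsum_mono; [apply admissible_root|]. intros u h Hadm _ _. simpl plus.
  eapply Rle_trans.
  - apply tsum_le_full; [assumption|]. intros u' h' Hadm'. now apply removed_len_ge0.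
  - unfold removed_len. rewrite <- tsum_comp. replace (s - 1 + 1)%nat with s by lia.
    destruct (deep_conditions w u h Hadm Hw) as [C1 [C2 C3]].
    unfold interval_len. now apply full_hit_len_deep.
Qed.

Lemma removed_le_earlier k : exists w, (w <= k)%nat /\ (k - w <= s - 1)%nat /\
  alive k 0 a a removed_len <= 20 * c * surviving_len w.
Proof.
  destruct (le_lt_dec (S k) s) as [Hle | Hlt].
  - exists 0%nat. split; [lia | split; [lia|]].
    pose proof (removed_shallow k). rewrite surviving_len_0. nra.
  - exists (S k - s)%nat. split; [lia | split; [lia|]].
    replace k with ((S k - s) + (s - 1))%nat at 1 by lia.
    apply removed_deep. lia.
Qed.

Lemma decay_step e d x y z : 0 <= e -> 0 <= d -> 0 <= x ->
  (1 - e * d) * x <= y -> (1 - e) * y <= z -> e <= 1 -> (1 - e * (d + 1)) * x <= z.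
Proof. intros. assert (0 <= e * e * d * x) by (repeat apply Rmult_le_pos; assumption). nra. Qed.

Lemma surviving_len_decay k : (forall i, (i <= k)%nat -> 0 < surviving_len i) /\
  (forall j, (j <= k)%nat -> (1 - 40 * c * (INR k - INR j)) * surviving_len j <= surviving_len k).
Proof.
  assert (Hs1r : 1 <= INR s) by (apply (le_INR 1); assumption).
  assert (40 * c <= 1 / 2) by nra.
  induction k as [|k [Hpos Hrate]].
  - split; intros i Hi; replace i with 0%nat by lia.
    + rewrite surviving_len_0. lra.
    + simpl. lra.
  - assert (Hstep : (1 - 40 * c) * surviving_len k <= surviving_len (S k)).
    { destruct (removed_le_earlier k) as [w [Hwk [Hws Hrem]]].
      assert (Hkw : INR k - INR w <= INR s - 1).
      { rewrite <- minus_INR by lia.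
        replace (INR s - 1) with (INR (s - 1)) by (rewrite minus_INR by lia; simpl; ring).
        apply le_INR. lia. }
      pose proof (Hrate w Hwk). pose proof (Hpos w Hwk). pose proof (Hpos k ltac:(lia)).
      assert (c * (INR k - INR w) <= c * (INR s - 1)) by (apply Rmult_le_compat_l; lra).
      assert (Hw2 : surviving_len w <= 2 * surviving_len k) by nra.
      rewrite surviving_len_S. nra. }
    pose proof (Hpos k ltac:(lia)).
    split.
    + intros i Hi. destruct (Nat.eq_dec i (S k)) as [-> | Hne]; [nra | apply Hpos; lia].
    + intros j Hj. destruct (Nat.eq_dec j (S k)) as [-> | Hne]; [rewrite Rminus_diag; lra|].
      rewrite S_INR. replace (INR k + 1 - INR j) with ((INR k - INR j) + 1) by ring.
      apply decay_step with (surviving_len k); try lra.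
      * pose proof (le_INR j k ltac:(lia)). lra.
      * apply Rlt_le, Hpos. lia.
      * apply Hrate. lia.
Qed.

Lemma finite_good_point k : exists t, a <= t <= 2 * a /\
  forall i, (1 <= i <= k)%nat -> c <= dist_int (exp (INR i * t)).
Proof.
  destruct (surviving_len_decay k) as [Hpos _].
  destruct (alive_point k 0 a a admissible_root (Hpos k (Nat.le_refl k))) as [t [Ht Hall]].
  exists t. split; [lra|]. intros i Hi. apply Hall; lia.
Qed.

End CantorTree.

(** * Compactness *)

Lemma glb_exists (P : R -> Prop) lo : (exists t, P t) -> (forall t, P t -> lo <= t) ->
  { g : R | (forall t, P t -> g <= t) /\ (forall b, (forall t, P t -> b <= t) -> b <= g) }.
Proof.
  intros Hne Hlo.
  destruct (completeness (fun y => P (- y))) as [l [Hub Hlub]].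
  - exists (- lo). intros y Hy. specialize (Hlo _ Hy). lra.
  - destruct Hne as [t Ht]. exists (- t). now rewrite Ropp_involutive.
  - exists (- l). split.
    + intros t Ht. assert (- t <= l) by (apply Hub; now rewrite Ropp_involutive). lra.
    + intros b Hb. assert (l <= - b) by (apply Hlub; intros y Hy; specialize (Hb _ Hy); lra). lra.
Qed.

(* The supremum of the infima of a decreasing sequence of nonempty subsets of
   [[lo, hi]] adheres to each of them. *)
Lemma nested_adherent_point (P : nat -> R -> Prop) lo hi :
  (forall k k' t, (k <= k')%nat -> P k' t -> P k t) ->
  (forall k, exists t, P k t) -> (forall k t, P k t -> lo <= t <= hi) ->
  exists x, lo <= x <= hi /\ forall k d, 0 < d -> exists t, P k t /\ Rabs (t - x) < d.
Proof.
  intros Hdecr Hne Hbd.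
  assert (G : forall k, { g : R | (forall t, P k t -> g <= t) /\
                                  (forall b, (forall t, P k t -> b <= t) -> b <= g) }).
  { intros k. apply (glb_exists _ lo); [apply Hne|]. intros t Ht. apply (Hbd k t Ht). }
  set (g := fun k => proj1_sig (G k)).
  assert (Hg_lb : forall k t, P k t -> g k <= t) by (intros k; exact (proj1 (proj2_sig (G k)))).
  assert (Hg_glb : forall k b, (forall t, P k t -> b <= t) -> b <= g k)
    by (intros k; exact (proj2 (proj2_sig (G k)))).
  assert (Hg_mono : forall k k', (k <= k')%nat -> g k <= g k').
  { intros k k' Hkk. apply Hg_glb. intros t Ht. apply Hg_lb. now apply (Hdecr k k'). }
  assert (Hg_lo : forall k, lo <= g k) by (intros k; apply Hg_glb; intros t Ht; apply (Hbd k t Ht)).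
  assert (Hg_hi : forall k, g k <= hi).
  { intros k. destruct (Hne k) as [t Ht]. pose proof (Hg_lb k t Ht). pose proof (Hbd k t Ht). lra. }
  destruct (completeness (fun y => exists k, y = g k)) as [x [Hub Hlub]].
  { exists hi. intros y [k ->]. apply Hg_hi. }
  { exists (g 0%nat), 0%nat. reflexivity. }
  assert (Hgx : forall k, g k <= x) by (intros k; apply Hub; now exists k).
  exists x. split.
  { split; [pose proof (Hg_lo 0%nat); pose proof (Hgx 0%nat); lra|].
    apply Hlub. intros y [k ->]. apply Hg_hi. }
  intros k d Hd.
  assert (Hk' : exists k', x - d / 2 < g k').
  { apply NNPP. intros Hn. assert (x <= x - d / 2) by (apply Hlub; intros y [k' ->];
      apply Rnot_lt_le; intros Hlt; apply Hn; now exists k'). lra. }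
  destruct Hk' as [k' Hk'].
  set (k2 := Nat.max k k').
  pose proof (Hg_mono k' k2 ltac:(lia)). pose proof (Hgx k2).
  assert (Ht : exists t, P k2 t /\ t < g k2 + d / 2).
  { apply NNPP. intros Hn. assert (g k2 + d / 2 <= g k2) by (apply Hg_glb; intros t Ht;
      apply Rnot_lt_le; intros Hlt; apply Hn; now exists t). lra. }
  destruct Ht as [t [Ht Htlt]]. pose proof (Hg_lb k2 t Ht).
  exists t. split; [apply (Hdecr k k2); [lia | assumption]|].
  apply Rabs_def1; lra.
Qed.

Lemma dist_int_exp_ge_of_adherent K x c : 0 <= K ->
  (forall d, 0 < d -> exists t, c <= dist_int (exp (K * t)) /\ Rabs (t - x) < d) ->
  c <= dist_int (exp (K * x)).
Proof.
  intros HK Hadh. apply Rnot_lt_le. intros Hlt.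
  set (gap := c - dist_int (exp (K * x))).
  set (M := K * exp (K * (x + 1)) + 1).
  assert (HM : 0 < M) by (unfold M; pose proof (exp_pos (K * (x + 1))); nra).
  destruct (Hadh (Rmin 1 (gap / M)) ltac:(apply Rmin_pos; [lra | apply Rdiv_lt_0_compat; unfold gap; lra]))
    as [t [Ht Hclose]].
  pose proof (Rmin_l 1 (gap / M)). pose proof (Rmin_r 1 (gap / M)).
  pose proof (exp_mul_lipschitz K x t HK ltac:(lra)) as Hlip.
  assert (Hlip' : Rabs (exp (K * t) - exp (K * x)) < gap).
  { eapply Rle_lt_trans; [exact Hlip|].
    apply Rle_lt_trans with (M * Rabs (t - x)).
    - apply Rmult_le_compat_r; [apply Rabs_pos | unfold M; lra].
    - replace gap with (M * (gap / M)) by (field; lra). apply Rmult_lt_compat_l; lra. }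
  pose proof (dist_int_lipschitz (exp (K * t)) (exp (K * x))). unfold gap in Hlip'. lra.
Qed.

Lemma good_point_of_finite c lo hi :
  (forall k, exists t, lo <= t <= hi /\ forall i, (1 <= i <= k)%nat -> c <= dist_int (exp (INR i * t))) ->
  exists t, lo <= t <= hi /\ forall i, (1 <= i)%nat -> c <= dist_int (exp (INR i * t)).
Proof.
  intros Hfin.
  set (P := fun k t => lo <= t <= hi /\ forall i, (1 <= i <= k)%nat -> c <= dist_int (exp (INR i * t))).
  destruct (nested_adherent_point P lo hi) as [x [Hx Hadh]].
  - intros k k' t Hkk [Ht Hall]. split; [assumption|]. intros i Hi. apply Hall. lia.
  - exact Hfin.
  - intros k t [Ht _]. exact Ht.
  - exists x. split; [assumption|]. intros i Hi.
    apply dist_int_exp_ge_of_adherent; [apply pos_INR|]. intros d Hd.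
    destruct (Hadh i d Hd) as [t [[_ Hall] Hclose]].
    exists t. split; [apply Hall; lia | assumption].
Qed.

(** * Choice of the parameters *)

Lemma is_inf_pos_ge (f : nat -> R) c : (forall n, (1 <= n)%nat -> c <= f n) ->
  exists r, is_inf_pos f r /\ c <= r.
Proof.
  intros Hf.
  destruct (completeness (fun w => exists n, (1 <= n)%nat /\ w = - f n)) as [l [Hub Hlub]].
  - exists (- c). intros w [n [Hn ->]]. specialize (Hf n Hn). lra.
  - exists (- f 1%nat), 1%nat. split; [lia | reflexivity].
  - exists (- l). repeat split.
    + intros n Hn. assert (- f n <= l) by (apply Hub; now exists n). lra.
    + intros m Hm. assert (l <= - m) by (apply Hlub; intros w [n [Hn ->]]; specialize (Hm n Hn); lra). lra.
    + assert (l <= - c) by (apply Hlub; intros w [n [Hn ->]]; specialize (Hf n Hn); lra). lra.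
Qed.

Section Scale.

Variable L : R.
Hypothesis HL : 393216 <= L.

Let a := exp (- L).
Let c := a / (1024 * L).

Lemma exp_L_large : 98304 * L <= exp L.
Proof. pose proof (exp_ge_sqr L ltac:(lra)). nra. Qed.

Lemma scale_bounds : 0 < a /\ a < 1 / 4 /\ 0 < c /\ 4 * c < a /\ a * exp L = 1.
Proof.
  pose proof exp_L_large. pose proof (exp_pos L).
  assert (HaE : a * exp L = 1) by (unfold a; rewrite exp_Ropp; field; lra).
  assert (Ha : 0 < a) by apply exp_pos.
  assert (Hc : c * (1024 * L) = a) by (unfold c; field; lra).
  repeat split; nra.
Qed.

(* The depth [s] is the first level at which [exp (s a)] exceeds [exp (2 L)]. *)
Lemma depth_exists : exists s, (1 <= s)%nat /\ 2 <= exp (INR s * a) /\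
  24 <= c / 4 * exp ((INR s - 1) * a) /\ c * (INR s + 1) <= 1 / 32 /\ 40 * c * INR s <= 1 / 2.
Proof.
  destruct scale_bounds as [Ha [Ha4 [Hc [Hca HaE]]]].
  pose proof exp_L_large. pose proof (exp_pos L).
  assert (Hc' : c * (1024 * L) = a) by (unfold c; field; lra).
  set (y := 2 * L / a).
  destruct (archimed y) as [Hu1 Hu2].
  assert (Hya : y * a = 2 * L) by (unfold y; field; lra).
  assert (Hy : 0 < y) by (unfold y; apply Rdiv_lt_0_compat; lra).
  assert (Hupos : (0 <= up y)%Z) by (apply le_IZR; lra).
  exists (S (Z.to_nat (up y))).
  rewrite S_INR, INR_IZR_INZ, Z2Nat.id by lia.
  set (U := IZR (up y)) in *.
  assert (HUa : 2 * L < U * a) by nra.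
  assert (HUa2 : U * a <= 2 * L + a) by nra.
  assert (Hs : 4 * c <= 1 / 32 * (1 / 8)) by nra.
  assert (HcU : c * U <= 3 / 1024).
  { apply (Rmult_le_reg_r (1024 * L)); [lra|]. nra. }
  repeat split; [lia | | | nra | nra].
  - pose proof (exp_ineq1_le ((U + 1) * a)). nra.
  - replace (U + 1 - 1) with U by ring.
    assert (exp (2 * L) <= exp (U * a)) by (apply exp_le; lra).
    assert (HEE : exp (2 * L) = exp L * exp L) by (rewrite <- exp_plus; f_equal; ring).
    assert (c / 4 * (exp L * exp L) = exp L / (4096 * L)) by (unfold c, a; rewrite exp_Ropp; field; lra).
    assert (24 <= exp L / (4096 * L)).
    { apply (Rmult_le_reg_r (4096 * L)); [lra|].
      replace (exp L / (4096 * L) * (4096 * L)) with (exp L) by (field; lra). lra. }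
    assert (Hmono : c / 4 * exp (2 * L) <= c / 4 * exp (U * a)) by (apply Rmult_le_compat_l; lra).
    rewrite HEE in Hmono. lra.
Qed.

Lemma scale_lt delta : 0 < delta -> 4 / delta <= L -> 4 * a < delta.
Proof.
  intros Hdelta HLdelta. destruct scale_bounds as [_ [_ [_ [_ HaE]]]].
  pose proof (exp_ineq1_le L). apply (Rmult_lt_reg_r (exp L)); [apply exp_pos|].
  rewrite Rmult_assoc, HaE. apply (Rmult_le_compat_l delta) in HLdelta; [|lra].
  replace (delta * (4 / delta)) with 4 in HLdelta by (field; lra). nra.
Qed.

Lemma eps_bound eps : 0 < eps <= 4 * a -> / 2 ^ 17 * eps * / Rabs (ln eps) < c.
Proof.
  intros [He0 He4]. destruct scale_bounds as [Ha [Ha4 [Hc [Hca HaE]]]].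
  assert (Hln : ln eps <= 2 - L).
  { apply Rle_trans with (ln (4 * a)); [apply ln_le; lra|].
    rewrite ln_mult by lra. unfold a. rewrite ln_exp. pose proof ln_4_le_2. lra. }
  rewrite Rabs_left by lra.
  assert (/ (- ln eps) <= / (L / 2)) by (apply Rinv_le_contravar; lra).
  assert (0 < / (- ln eps)) by (apply Rinv_0_lt_compat; lra).
  replace (2 ^ 17) with 131072 by ring.
  apply Rle_lt_trans with (/ 131072 * (4 * a) * / (L / 2)).
  - apply Rmult_le_compat; [apply Rmult_le_pos | | apply Rmult_le_compat_l |]; lra.
  - unfold c. replace (/ 131072 * (4 * a) * / (L / 2)) with (a / (16384 * L)) by (field; lra).
    apply Rmult_lt_compat_l; [lra|]. apply Rinv_lt_contravar; nra.
Qed.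

End Scale.

Theorem theorem1 :
  forall delta : R, 0 < delta ->
  exists eps : R, 0 < eps /\ eps < delta /\ eps <> 1 /\
    exists r : R,
      is_inf_pos (fun n => dist_int ((1 + eps) ^ n)) r /\
      r > / 2 ^ 17 * eps * / Rabs (ln eps).
Proof.
  intros delta Hdelta.
  set (L := Rmax 393216 (4 / delta)).
  assert (HL : 393216 <= L) by apply Rmax_l.
  assert (HLdelta : 4 / delta <= L) by apply Rmax_r.
  destruct (scale_bounds L HL) as [Ha [Ha4 [Hc [Hca _]]]].
  destruct (depth_exists L HL) as [s [Hs1 [Hs_exp [Hs_long [Hs_short Hs_rate]]]]].
  pose proof (eps_bound L HL) as Hbound. pose proof (scale_lt L HL delta Hdelta HLdelta).
  set (a := exp (- L)) in *. set (c := a / (1024 * L)) in *.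
  destruct (good_point_of_finite c a (2 * a)
              (finite_good_point a c Ha ltac:(lra) Hc Hca s Hs1 Hs_exp Hs_long Hs_short Hs_rate))
    as [t [Ht Hgood]].
  assert (Heps : 0 < exp t - 1 <= 4 * a) by (pose proof (exp_sub_1_between t ltac:(lra)); lra).
  exists (exp t - 1). split; [lra | split; [lra | split; [intros Heq; lra|]]].
  destruct (is_inf_pos_ge (fun n => dist_int ((1 + (exp t - 1)) ^ n)) c) as [r [Hinf Hr]].
  { intros n Hn. replace (1 + (exp t - 1)) with (exp t) by ring. rewrite exp_pow. now apply Hgood. }
  exists r. split; [exact Hinf|]. pose proof (Hbound (exp t - 1) Heps). lra.
Qed.
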